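(* Let $\mathcal{U}$ be a finite set of users, each associated with a base station $b_u$, where each base station $b$ has a finite set of integer-indexed subchannels $\mathcal{C}_b$, and assume the number of users associated with each base station $b$ is at most $|\mathcal{C}_b|$. Some users are ''ongoing'', each having a previously used subchannel $\bar c_u\in\mathcal{C}_{b_u}$, where ongoing users associated with the same base station have pairwise distinct previous subchannels. For each $u$ let $\mathcal{C}^t_u=\{\bar c_u\}$ if $u$ is ongoing and $\mathcal{C}^t_u=\mathcal{C}_{b_u}$ otherwise. Call two distinct users $u,u'$ conflicting if $b_u=b_{u'}$, or if both are ongoing with $\bar c_u\neq\bar c_{u'}$. Let interference weights $i^t_{u,u'}$ satisfy $i^t_{u,u}=0$, $i^t_{u,u'}=+\infty$ for conflicting pairs, and $i^t_{u,u'}\in[0,\infty)$ otherwise. Then the problem (P3): minimize over $\boldsymbol{c}^t$ with $c^t_u\in\mathcal{C}^t_u$ for all $u$ the objective $\frac12\sum_{u,u'\in\mathcal{U}}\max\{0,1-|c^t_u-c^t_{u'}|\}\, i^t_{u,u'}$ (with $0\cdot\infty=0$), has a feasible solution with finite objective value.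
   Context: In the paper, the hypotheses on the number of users per base station and on the ongoing users are guaranteed by the preceding user-association step (which never associates more users with a base station than it has subchannels, and keeps ongoing users on their previous base station and subchannel). *)

From HB Require Import structures.
From mathcomp Require Import all_boot all_order all_algebra.
From mathcomp Require Import reals constructive_ereal.
Set Implicit Arguments. Unset Strict Implicit. Unset Printing Implicit Defensive.
Import Order.TTheory GRing.Theory Num.Theory.
Local Open Scope ring_scope.
Local Open Scope ereal_scope.

Section Defs.
Variables (U : finType) (B : eqType) (R : realType).
Variables (b : U -> B) (C : B -> seq int) (ongoing : U -> bool) (cbar : U -> int).

Definition Ct (u : U) : seq int := if ongoing u then [:: cbar u] else C (b u).

Definition conflicting (u u' : U) : bool :=
  (u != u') && ((b u == b u') || [&& ongoing u, ongoing u' & cbar u != cbar u']).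

(* objective of (P3); ereal product has 0 * +oo = 0 *)
Definition P3_obj (i : U -> U -> \bar R) (c : U -> int) : \bar R :=
  (2^-1)%:E * \sum_(u : U) \sum_(u' : U)
     ((Num.max 0 (1 - (`|c u - c u'|%:~R : R)))%:E * i u u').
End Defs.

(** Serve each base station separately: its ongoing users keep their (pairwise distinct)
    previous subchannels, and its new users get pairwise distinct subchannels among the
    remaining ones, of which there are enough because the station has no more users than
    subchannels.  Then conflicting users get distinct integer subchannels, so their overlap
    [max{0, 1 - |c_u - c_u'|}] vanishes and kills the infinite weight; all remaining weights
    are finite.  Neither [cbar u \in C (b u)] nor the values of the weights on conflicting
    pairs are needed. *)
From HB Require Import structures.
From mathcomp Require Import all_boot all_order all_algebra.
From mathcomp Require Import reals constructive_ereal.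
Set Implicit Arguments. Unset Strict Implicit. Unset Printing Implicit Defensive.
Import Order.TTheory GRing.Theory Num.Theory.
Local Open Scope ring_scope.
Local Open Scope ereal_scope.

Lemma leq_size_filter_notin (T : eqType) (s t : seq T) :
  uniq t -> (size t <= size [seq x <- t | x \notin s] + size s)%N.
Proof.
move=> t_uniq; rewrite size_filter -[X in (X <= _)%N](count_predC (mem s)) addnC.
rewrite leq_add2l -size_filter; apply: uniq_leq_size; first exact: filter_uniq.
by move=> x; rewrite mem_filter => /andP[].
Qed.

Lemma nth_index_in_inj (T S : eqType) (x0 : S) (s : seq T) (t : seq S) :
  uniq t -> (size s <= size t)%N -> {in s &, injective (fun x => nth x0 t (index x s))}.
Proof.
move=> t_uniq le_st x y xs ys /eqP; rewrite nth_uniq ?(leq_trans _ le_st) ?index_mem //.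
by move=> /eqP; apply: index_inj.
Qed.

Lemma overlap_eq0 (R : realDomainType) (x y : int) :
  x != y -> (Num.max 0 (1 - `|x - y|%:~R) = 0 :> R)%R.
Proof.
move=> neq_xy; apply/max_idPl; rewrite subr_le0 ler1z.
by rewrite -gtz0_ge1 normr_gt0 subr_eq0.
Qed.

Lemma P3_obj_fin_num (U : finType) (R : realType) (i : U -> U -> \bar R) (c : U -> int) :
  (forall u u', c u = c u' -> i u u' \is a fin_num) -> P3_obj i c \is a fin_num.
Proof.
move=> fin_same; apply: fin_numM => //.
apply/sum_fin_numP => u _ _; apply/sum_fin_numP => u' _ _.
have [same|/overlap_eq0 ->] := eqVneq (c u) (c u'); last by rewrite mul0e.
exact/fin_numM/fin_same.
Qed.

Section Assignment.
Variables (U : finType) (B : eqType) (b : U -> B) (C : B -> seq int).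
Variables (ongoing : U -> bool) (cbar : U -> int).
Hypothesis C_uniq : forall bs : B, uniq (C bs).
Hypothesis card_users_le : forall bs : B, (#|[set u : U | b u == bs]| <= size (C bs))%N.
Hypothesis cbar_neq : forall u u' : U, u != u' -> ongoing u -> ongoing u' ->
  b u = b u' -> cbar u != cbar u'.

Definition new_users (bs : B) : seq U :=
  [seq u <- enum [set u : U | b u == bs] | ~~ ongoing u].

Definition ongoing_users (bs : B) : seq U :=
  [seq u <- enum [set u : U | b u == bs] | ongoing u].

Definition free_channels (bs : B) : seq int :=
  [seq x <- C bs | x \notin map cbar (ongoing_users bs)].

Definition assign (u : U) : int :=
  if ongoing u then cbar u
  else nth 0%R (free_channels (b u)) (index u (new_users (b u))).

Lemma mem_new_users (bs : B) (u : U) :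
  (u \in new_users bs) = (b u == bs) && ~~ ongoing u.
Proof. by rewrite mem_filter mem_enum inE andbC. Qed.

Lemma mem_ongoing_users (bs : B) (u : U) :
  (u \in ongoing_users bs) = (b u == bs) && ongoing u.
Proof. by rewrite mem_filter mem_enum inE andbC. Qed.

Lemma size_new_users_le (bs : B) : (size (new_users bs) <= size (free_channels bs))%N.
Proof.
have card_split : #|[set u : U | b u == bs]| = (size (ongoing_users bs) + size (new_users bs))%N.
  by rewrite cardE -(count_predC ongoing) !size_filter.
have := @leq_size_filter_notin _ (map cbar (ongoing_users bs)) _ (C_uniq bs).
rewrite size_map -/(free_channels bs) => le_C_free.
rewrite -(leq_add2l (size (ongoing_users bs))) [leqRHS]addnC -card_split.
exact: leq_trans (card_users_le bs) le_C_free.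
Qed.

Lemma free_channels_uniq (bs : B) : uniq (free_channels bs).
Proof. exact/filter_uniq/C_uniq. Qed.

Lemma assign_free (u : U) : ~~ ongoing u -> assign u \in free_channels (b u).
Proof.
move=> new_u; rewrite /assign (negbTE new_u); apply/mem_nth/(leq_trans _ (size_new_users_le _)).
by rewrite index_mem mem_new_users eqxx.
Qed.

Lemma assign_in_Ct (u : U) : assign u \in Ct b C ongoing cbar u.
Proof.
rewrite /Ct; case: ifPn => [ong_u|new_u]; first by rewrite /assign ong_u mem_seq1.
by have := assign_free new_u; rewrite mem_filter => /andP[].
Qed.

Lemma assign_ongoing_new_neq (u v : U) :
  ongoing u -> ~~ ongoing v -> b u = b v -> assign u != assign v.
Proof.
move=> ong_u new_v buv; have := assign_free new_v; rewrite mem_filter => /andP[+ _].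
apply: contra => /eqP <-; rewrite /assign ong_u; apply: map_f.
by rewrite mem_ongoing_users buv eqxx.
Qed.

Lemma assign_same_station_neq (u v : U) : u != v -> b u = b v -> assign u != assign v.
Proof.
move=> neq_uv buv; case: (boolP (ongoing u)) => [ong_u|new_u].
  case: (boolP (ongoing v)) => [ong_v|new_v]; last exact: assign_ongoing_new_neq.
  by rewrite /assign ong_u ong_v; apply: cbar_neq.
case: (boolP (ongoing v)) => [ong_v|new_v].
  by rewrite eq_sym; apply: assign_ongoing_new_neq.
rewrite /assign (negbTE new_u) (negbTE new_v) -buv; apply: contra neq_uv => /eqP.
move=> /(nth_index_in_inj (free_channels_uniq _) (size_new_users_le _)) -> //.
  by rewrite mem_new_users eqxx.
by rewrite mem_new_users buv eqxx.
Qed.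

Lemma assign_conflicting_neq (u v : U) :
  conflicting b ongoing cbar u v -> assign u != assign v.
Proof.
case/andP=> neq_uv /orP[/eqP|/and3P[ong_u ong_v]]; first exact: assign_same_station_neq.
by rewrite /assign ong_u ong_v.
Qed.

End Assignment.

Theorem lemma2 (U : finType) (B : eqType) (R : realType)
  (b : U -> B) (C : B -> seq int) (ongoing : U -> bool) (cbar : U -> int)
  (i : U -> U -> \bar R)
  (HCuniq : forall bs : B, uniq (C bs))
  (Hcard : forall bs : B, (#|[set u : U | b u == bs]| <= size (C bs))%N)
  (Hprev : forall u : U, ongoing u -> cbar u \in C (b u))
  (Hdist : forall u u' : U, u != u' -> ongoing u -> ongoing u' ->
             b u = b u' -> cbar u != cbar u')
  (Hii : forall u : U, i u u = 0)
  (Hconf : forall u u' : U, conflicting b ongoing cbar u u' -> i u u' = +oo)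
  (Hfin : forall u u' : U, u != u' -> ~~ conflicting b ongoing cbar u u' ->
            0 <= i u u' /\ i u u' \is a fin_num) :
  exists c : U -> int,
    (forall u : U, c u \in Ct b C ongoing cbar u) /\
    P3_obj i c \is a fin_num.
Proof.
exists (assign b C ongoing cbar); split; first exact: assign_in_Ct.
apply: P3_obj_fin_num => u u' same_channel.
have [<-|neq_uu'] := eqVneq u u'; first by rewrite Hii.
have no_conflict : ~~ conflicting b ongoing cbar u u'.
  apply/negP => /(assign_conflicting_neq HCuniq Hcard Hdist).
  by rewrite same_channel eqxx.
exact: (Hfin u u' neq_uu' no_conflict).2.
Qed.
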